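(* Let $F$ and $p$ be positive integers and let $a$ be the smallest positive integer that does not divide $F$. Then $\mathrm{Sat}(F)$ contains at least one element of $\mathrm{Sat}(F)$-rank equal to $p$ if and only if $a(2^p-1)<F$.
   Context: A numerical semigroup is a subset $S\subseteq\mathbb{N}$ closed under addition, containing $0$, with $\mathbb{N}\setminus S$ finite; its Frobenius number $\mathrm{F}(S)$ is the largest integer not in $S$. For $A\subseteq\mathbb{N}$ and $a\in A$, let $\mathrm{d}_A(a)=\gcd\{x\in A\mid x\le a\}$. A numerical semigroup $S$ is saturated if $s+\mathrm{d}_S(s)\in S$ for all $s\in S\setminus\{0\}$. For a positive integer $F$, $\mathrm{Sat}(F)$ denotes the set of all saturated numerical semigroups $S$ with $\mathrm{F}(S)=F$. Let $\Delta(F+1)=\{0\}\cup\{x\in\mathbb{N}\mid x\ge F+1\}$. A set $X\subseteq\mathbb{N}$ is a $\mathrm{Sat}(F)$-set if $X\cap\Delta(F+1)=\emptyset$ and there exists $S\in\mathrm{Sat}(F)$ with $X\subseteq S$. For a $\mathrm{Sat}(F)$-set $X$, $\mathrm{Sat}(F)[X]$ denotes the intersection of all elements of $\mathrm{Sat}(F)$ containing $X$ (the smallest element of $\mathrm{Sat}(F)$ containing $X$). If $S=\mathrm{Sat}(F)[X]$, $X$ is a $\mathrm{Sat}(F)$-system of generators of $S$; it is minimal if $S\neq\mathrm{Sat}(F)[Y]$ for every proper subset $Y\subsetneq X$. Every $S\in\mathrm{Sat}(F)$ has a unique minimal $\mathrm{Sat}(F)$-system of generators, and its cardinality is the $\mathrm{Sat}(F)$-rank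 of $S$. *)

From mathcomp Require Import all_boot.
Set Implicit Arguments. Unset Strict Implicit. Unset Printing Implicit Defensive.

Definition numerical_semigroup (S : pred nat) : Prop :=
  S 0 /\ (forall x y, S x -> S y -> S (x + y)) /\
  (exists N, forall x, N <= x -> S x).

Definition frobenius_is (S : pred nat) (F : nat) : Prop :=
  ~~ S F /\ (forall x, F < x -> S x).

Definition dA (A : pred nat) (a : nat) : nat :=
  \big[gcdn/0]_(0 <= x < a.+1 | A x) x.

Definition saturated (S : pred nat) : Prop :=
  forall s, S s -> s != 0 -> S (s + dA S s).

Definition inSat (F : nat) (S : pred nat) : Prop :=
  numerical_semigroup S /\ saturated S /\ frobenius_is S F.

Definition subset_nat (X Y : pred nat) : Prop := forall x, X x -> Y x.

Definition SatF_set (F : nat) (X : pred nat) : Prop :=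
  (forall x, X x -> 0 < x <= F) /\ exists S, inSat F S /\ subset_nat X S.

Definition SatF_generated (F : nat) (X S : pred nat) : Prop :=
  forall x, S x <-> (forall T, inSat F T -> subset_nat X T -> T x).

Definition SatF_system (F : nat) (S X : pred nat) : Prop :=
  SatF_set F X /\ SatF_generated F X S.

Definition SatF_minimal_system (F : nat) (S X : pred nat) : Prop :=
  SatF_system F S X /\
  forall Y : pred nat, subset_nat Y X -> (exists x, X x /\ ~~ Y x) ->
    ~ SatF_generated F Y S.

(* cardinality of a Sat(F)-set (it is contained in {1,...,F}) *)
Definition card_SatF_set (F : nat) (X : pred nat) : nat := count X (iota 1 F).

Definition SatF_rank_is (F : nat) (S : pred nat) (p : nat) : Prop :=
  exists X, SatF_minimal_system F S X /\ card_SatF_set F X = p.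

(* Necessity.  Let x_1 < ... < x_p be the minimal Sat(F)-generators of S.
   Minimality makes the list gcd-strict: gcd(x_1, ..., x_{k-1}) never divides
   x_k, for otherwise saturation would recover x_k from the others.  For such a
   list each new element at least halves the running gcd and exceeds the
   previous element by at least the new gcd, whence
   g * (2^p - 1) <= x_p < F with g = gcd(x_1, ..., x_p).  Saturation from x_p
   also shows that g does not divide F, so a <= g.

   Sufficiency.  The numbers a * (2^p - 2^(p-i)), 1 <= i <= p, generate an
   element of Sat(F) minimally: each of them is excluded from an explicit
   element of Sat(F) (multiples of a * 2^(p-i+1), multiples of a above it, and
   everything above F) that contains all the others. *)

From mathcomp Require Import all_boot zify.
From Stdlib Require Import ClassicalEpsilon.

Set Implicit Arguments. Unset Strict Implicit. Unset Printing Implicit Defensive.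

Lemma dA_dvd (T : pred nat) u x : T x -> x <= u -> dA T u %| x.
Proof.
move=> Tx le_xu; rewrite /dA big_mkord.
exact: (biggcdn_inf (Ordinal (le_xu : x < u.+1))).
Qed.

Lemma dvd_dA (T : pred nat) u d :
  (forall x, T x -> x <= u -> d %| x) -> d %| dA T u.
Proof.
move=> dT; rewrite /dA big_seq_cond.
apply: (big_ind (fun g => d %| g)) => // [x y dx dy|x].
  by rewrite dvdn_gcd dx dy.
by rewrite mem_index_iota => /andP [/andP [_ lt_xu] Tx]; apply: dT.
Qed.

Lemma dA_gt0 (T : pred nat) u : T u -> 0 < u -> 0 < dA T u.
Proof. by move=> Tu u_gt0; apply: dvdn_gt0 u_gt0 (dA_dvd Tu (leqnn u)). Qed.


(* A saturated set is closed under stepping forward from u by any multiple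
   of d_T(u): repeating the step s -> s + d_T(s) reaches every such v, since
   d_T only decreases (in the divisibility order) along the way. *)
Lemma saturated_reach (T : pred nat) u v : saturated T ->
  T u -> 0 < u -> u <= v -> dA T u %| v - u -> T v.
Proof.
move=> satT; have [n] := ubnP (v - u); elim: n u => // n IH u.
move=> lt_vu_n Tu u_gt0 le_uv dvd_vu.
have [<- //|ne_uv] := eqVneq u v.
have d_gt0 := dA_gt0 Tu u_gt0.
have le_d : dA T u <= v - u by apply: dvdn_leq => //; lia.
have Tud : T (u + dA T u) by apply: satT => //; lia.
have dA_step : dA T (u + dA T u) %| dA T u.
  by apply: dvd_dA => x Tx le_xu; apply: dA_dvd => //; lia.
apply: (IH (u + dA T u)) => //; try lia.
have -> : v - (u + dA T u) = (v - u) - dA T u by lia.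
by rewrite dvdn_sub // (dvdn_trans dA_step).
Qed.

Definition sat_closure (F : nat) (X : pred nat) : pred nat :=
  fun z => if excluded_middle_informative
      (forall T, inSat F T -> subset_nat X T -> T z) then true else false.

Lemma sat_closureP F X z :
  sat_closure F X z <-> (forall T, inSat F T -> subset_nat X T -> T z).
Proof. by rewrite /sat_closure; case: excluded_middle_informative. Qed.

Lemma sat_closure_sub F X : subset_nat X (sat_closure F X).
Proof. by move=> x Xx; apply/sat_closureP => T _; apply. Qed.

(* The intersection of a nonempty family of elements of Sat(F) lies in Sat(F),
   so Sat(F)[X] is an element of Sat(F) whenever X is contained in one. *)
Lemma sat_closure_inSat F X T0 :
  inSat F T0 -> subset_nat X T0 -> inSat F (sat_closure F X).
Proof.
move=> T0_sat XT0; split; [split; [|split]|split].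
- by apply/sat_closureP => T [[] ].
- move=> x y /sat_closureP Sx /sat_closureP Sy; apply/sat_closureP => T Tsat XT.
  by case: (Tsat) => [[_ [addT _]] _]; apply: addT; [apply: Sx | apply: Sy].
- by exists F.+1 => x lt_Fx; apply/sat_closureP => T [_ [_ [_]]] -> //.
- move=> s /sat_closureP Ss s_neq0; apply/sat_closureP => T Tsat XT.
  have Ts := Ss T Tsat XT; have [_ [satT _]] := Tsat.
  apply: (saturated_reach satT Ts); rewrite ?leq_addr ?addKn ?lt0n //.
  apply: dvd_dA => z /sat_closureP Sz le_zs.
  exact: dA_dvd (Sz T Tsat XT) le_zs.
- split; last by move=> x lt_Fx; apply/sat_closureP => T [_ [_ [_]]] ->.
  apply/negP => /sat_closureP SF; case: (T0_sat) => _ [_ [nT0F _]].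
  by rewrite (SF T0 T0_sat XT0) in nT0F.
Qed.

Definition gcdl (s : seq nat) : nat := foldr gcdn 0 s.

Lemma gcdl_dvd s x : x \in s -> gcdl s %| x.
Proof.
elim: s => //= y s IH; rewrite in_cons => /orP [/eqP ->|xs].
  exact: dvdn_gcdl.
exact: dvdn_trans (dvdn_gcdr _ _) (IH xs).
Qed.

Lemma dvd_gcdl s d : {in s, forall x, d %| x} -> d %| gcdl s.
Proof.
elim: s => //= y s IH ds; rewrite dvdn_gcd ds ?mem_head //=.
by apply: IH => x xs; apply: ds; rewrite in_cons xs orbT.
Qed.

(* If a saturated T contains a list s of positive elements with largest element
   w, then T contains every y >= w divisible by gcd(s): indeed d_T(w) divides
   gcd(s), so it divides y - w. *)
Lemma saturated_gcdl_reach (T : pred nat) (s : seq nat) w y : saturated T ->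
  {in s, forall x, T x /\ x <= w} -> w \in s -> 0 < w -> w <= y ->
  gcdl s %| y -> T y.
Proof.
move=> satT sT ws w_gt0 le_wy dvd_y.
have [Tw _] := sT w ws.
have dA_gcdl : dA T w %| gcdl s.
  by apply: dvd_gcdl => x /sT [Tx le_xw]; apply: dA_dvd.
apply: (saturated_reach satT Tw w_gt0 le_wy).
by apply: dvdn_sub; [exact: dvdn_trans dA_gcdl dvd_y | exact: dA_dvd].
Qed.

Definition gcd_strict (s : seq nat) : Prop :=
  forall t y r, s = t ++ y :: r -> t != [::] -> ~~ (gcdl t %| y).

Lemma gcd_strict_rcons s x : gcd_strict (rcons s x) -> gcd_strict s.
Proof.
by move=> strict t y r def_s; apply: (strict t y (rcons r x)); rewrite def_s rcons_cat.
Qed.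

Lemma proper_dvd_double d n : d %| n -> d != n -> 0 < n -> 2 * d <= n.
Proof.
move=> /dvdnP [k ->] ne_dn n_gt0.
have : k != 1 by apply: contra ne_dn => /eqP ->; rewrite mul1n.
have : 0 < k by move: n_gt0; rewrite muln_gt0 => /andP [].
nia.
Qed.

Lemma dvd_gap g w x : g %| w -> g %| x -> w < x -> w + g <= x.
Proof.
move=> /dvdnP [k ->] /dvdnP [l ->] lt_wx.
have : k < l by rewrite ltnNge; apply: contraTN lt_wx => le_lk; rewrite -leqNgt leq_mul.
nia.
Qed.

(* Appending x to a list t with gcd G gives a
   gcd g that is a proper divisor of G (as G does not divide x), so 2g <= G,
   while x exceeds max t by at least g. *)
Lemma gcd_strict_bound s : pairwise ltn s -> all (leq 1) s -> gcd_strict s ->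
  gcdl s * (2 ^ size s - 1) <= last 0 s.
Proof.
elim/last_ind: s => // t x IH.
rewrite -cats1 pairwise_cat all_cat => /and3P [lt_tx pw_t _] /andP [pos_t _].
rewrite cats1 => strict; rewrite last_rcons size_rcons.
case/lastP: t IH lt_tx pw_t pos_t strict => [_ _ _ _ _|t w IH lt_tx pw_t pos_t strict].
  by rewrite /= gcdn0 muln1.
have := IH pw_t pos_t (gcd_strict_rcons strict); rewrite last_rcons size_rcons.
set G := gcdl (rcons t w); set g := gcdl (rcons (rcons t w) x); set n := size t.
move=> IHw.
have wt : w \in rcons t w by rewrite mem_rcons mem_head.
have mem_x e : e \in rcons t w -> e \in rcons (rcons t w) x.
  by move=> e_in; rewrite mem_rcons in_cons e_in orbT.
have g_dvd_G : g %| G by apply: dvd_gcdl => e /mem_x; apply: gcdl_dvd.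
have G_ndvd_x : ~~ (G %| x) by apply: (strict _ x [::]); rewrite ?cats1 //; case: (t).
have G_gt0 : 0 < G by apply: dvdn_gt0 (gcdl_dvd wt); apply: (allP pos_t).
have gG : 2 * g <= G.
  apply: proper_dvd_double => //; apply: contra G_ndvd_x => /eqP <-.
  by apply: gcdl_dvd; rewrite mem_rcons mem_head.
have wgx : w + g <= x.
  apply: dvd_gap; first exact/gcdl_dvd/mem_x.
    by apply: gcdl_dvd; rewrite mem_rcons mem_head.
  exact: (allrelP lt_tx w x wt (mem_head _ _)).
have -> : 2 ^ n.+2 - 1 = 2 * (2 ^ n.+1 - 1) + 1 by rewrite !expnS; lia.
by rewrite mulnDr muln1 mulnA (mulnC g); nia.
Qed.

Definition elems (F : nat) (X : pred nat) : seq nat := filter X (iota 1 F).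

Lemma mem_elems F X z : (z \in elems F X) = X z && (0 < z <= F).
Proof. by rewrite mem_filter mem_iota; congr (_ && _); lia. Qed.

Lemma elems_pairwise F X : pairwise ltn (elems F X).
Proof.
rewrite -sorted_pairwise; last exact: ltn_trans.
exact/(sorted_filter ltn_trans)/iota_ltn_sorted.
Qed.

Lemma size_elems F X : size (elems F X) = card_SatF_set F X.
Proof. exact: size_filter. Qed.

Lemma pairwise_ltn_last s e : pairwise ltn s -> e \in s -> e <= last 0 s.
Proof.
case/lastP: s => // s x; rewrite -cats1 pairwise_cat mem_cat last_cat /=.
move=> /and3P [lt_sx _ _] /orP [es|]; last by rewrite mem_seq1 => /eqP ->.
exact/ltnW/(allrelP lt_sx e x es (mem_head _ _)).
Qed.

Lemma system_sub F S X : SatF_generated F X S -> subset_nat X S.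
Proof. by move=> genX x Xx; apply/genX => T _; apply. Qed.

(* Minimality forces the increasing list of generators to be gcd-strict: if
   gcd(x_1, ..., x_{k-1}) divided x_k, every saturated T containing the other
   generators would contain x_k as well (saturated_gcdl_reach), so x_k could
   be dropped from the system. *)
Lemma minimal_gcd_strict F S X :
  SatF_minimal_system F S X -> gcd_strict (elems F X).
Proof.
move=> [[_ genX] minX] t y r def_s; case/lastP: t def_s => // t w def_s _.
apply/negP => dvd_y.
have mem_s z : z \in elems F X -> X z /\ 0 < z by rewrite mem_elems => /and3P [].
have /and3P [lt_twy pw_tw _] : [&& allrel ltn (rcons t w) (y :: r),
    pairwise ltn (rcons t w) & pairwise ltn (y :: r)].
  by rewrite -pairwise_cat -def_s elems_pairwise.
have lt_y z : z \in rcons t w -> z < y.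
  by move=> zt; apply: (allrelP lt_twy z y zt (mem_head _ _)).
have in_s z : z \in rcons t w -> z \in elems F X by rewrite def_s mem_cat => ->.
have [Xy _] : X y /\ 0 < y by apply: mem_s; rewrite def_s mem_cat mem_head orbT.
apply: (minX (fun z => X z && (z != y))); first by move=> z /andP [].
  by exists y; rewrite Xy eqxx.
move=> x; rewrite genX; split=> S_x T Tsat YT; apply: S_x => // z; last first.
  by case/andP=> /YT.
move=> Xz; have [-> {z Xz}|ne_zy] := eqVneq z y; last by apply: YT; rewrite Xz ne_zy.
have wt : w \in rcons t w by rewrite mem_rcons mem_head.
apply: (saturated_gcdl_reach (s := rcons t w) (w := w)) => //.
- by case: Tsat => _ [].
- move=> e et; have [Xe _] := mem_s e (in_s e et); split.
    by apply: YT; rewrite Xe neq_ltn lt_y.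
  by have := pairwise_ltn_last pw_tw et; rewrite last_rcons.
- by have [] := mem_s w (in_s w wt).
- exact/ltnW/lt_y.
Qed.

(* Necessity: an element of Sat(F) of rank p > 0 yields a g > 0 not dividing F
   with g * (2^p - 1) < F, namely the gcd of its minimal generators.  The bound
   is gcd_strict_bound; g does not divide F since otherwise saturation from the
   largest generator would put F into S; and that generator is below F. *)
Lemma rank_gcd_bound F S p : 0 < p -> inSat F S -> SatF_rank_is F S p ->
  exists g, [/\ 0 < g, ~~ (g %| F) & g * (2 ^ p - 1) < F].
Proof.
move=> p_gt0 [_ [satS [nSF _]]] [X [minX cardX]].
have XS := system_sub minX.1.2.
set s := elems F X; set w := last 0 s.
have size_s : size s = p by rewrite size_elems.
have ws : w \in s.
  by case: s size_s @w => [|y s' _]; [move=> p0; rewrite -p0 in p_gt0 | exact: mem_last].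
have /and3P [Xw w_gt0 le_wF] : [&& X w, 0 < w & w <= F] by rewrite -mem_elems.
have le_sw e : e \in s -> S e /\ e <= w.
  move=> es; split; last exact: pairwise_ltn_last (elems_pairwise F X) es.
  by apply: XS; move: es; rewrite mem_elems => /andP [].
have lt_wF : w < F.
  by rewrite ltn_neqAle le_wF andbT; apply: contraNneq nSF => <-; apply: XS.
exists (gcdl s); split.
- exact: dvdn_gt0 w_gt0 (gcdl_dvd ws).
- by apply: contraNN nSF; apply: (saturated_gcdl_reach satS le_sw ws).
- apply: leq_ltn_trans lt_wF; rewrite -size_s.
  apply: gcd_strict_bound; first exact: elems_pairwise.
    by apply/allP => e; rewrite mem_elems => /and3P [].
  exact: minimal_gcd_strict minX.
Qed.

(* The test semigroups used to separate generators: for a | D and a not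
   dividing F, the multiples of D, the multiples of a above c, and everything
   above F. *)
Definition sat_witness (a F D c : nat) : pred nat :=
  fun z => (D %| z) || (a %| z) && (c < z) || (F < z).

Section Witness.

Variables a F D c : nat.
Hypotheses (a_dvd_D : a %| D) (a_ndvd_F : ~~ (a %| F)).

Local Notation W := (sat_witness a F D c).

Lemma witness_dvd z : W z -> z <= F -> a %| z.
Proof.
move=> /orP [/orP [Dz|/andP [az _]]|lt_Fz] le_zF //; first exact: dvdn_trans Dz.
by rewrite ltnNge le_zF in lt_Fz.
Qed.

Lemma witness_high z : W z -> ~~ (D %| z) -> z <= F -> c < z.
Proof.
move=> /orP [/orP [Dz|/andP [_ lt_cz]]|lt_Fz] nDz le_zF //.
  by rewrite Dz in nDz.
by rewrite ltnNge le_zF in lt_Fz.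
Qed.

(* A sum is a multiple of D if both summands are; otherwise some summand
   exceeds c and the sum is a multiple of a above c (or exceeds F). *)
Lemma witness_add x y : W x -> W y -> W (x + y).
Proof.
move=> Wx Wy; have [lt_F|le_F] := ltnP F (x + y); first by rewrite /W lt_F !orbT.
have [le_xF le_yF] : x <= F /\ y <= F by split; apply: leq_trans le_F; rewrite ?leq_addr ?leq_addl.
case: (boolP ((D %| x) && (D %| y))) => [/andP [Dx Dy]|/nandP nD].
  by rewrite /W dvdn_add.
have lt_c : c < x + y.
  case: nD => [/(witness_high Wx)|/(witness_high Wy)] /(_ _) lt_c.
    by apply: leq_trans (lt_c le_xF) (leq_addr _ _).
  by apply: leq_trans (lt_c le_yF) (leq_addl _ _).
by rewrite /W (dvdn_add (witness_dvd Wx le_xF) (witness_dvd Wy le_yF)) lt_c !orbT.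
Qed.

(* Saturation: above c every step preserves divisibility by a, and at or
   below c all smaller elements, hence d_W(s), are multiples of D. *)
Lemma witness_saturated : saturated W.
Proof.
move=> s Ws s_neq0; have [lt_Fs|le_sF] := ltnP F s.
  by rewrite /W (leq_trans lt_Fs (leq_addr _ _)) !orbT.
have [le_sc|lt_cs] := leqP s c.
  have low z : W z -> z <= s -> D %| z.
    move=> Wz le_zs; apply: contraTT le_sc => nDz; rewrite -ltnNge.
    exact: leq_trans (witness_high Wz nDz (leq_trans le_zs le_sF)) le_zs.
  by rewrite /W (dvdn_add (low s Ws (leqnn s)) (dvd_dA low)).
have dA_a : a %| dA W s.
  by apply: dvd_dA => z Wz le_zs; apply: witness_dvd Wz (leq_trans le_zs le_sF).
by rewrite /W (dvdn_add (witness_dvd Ws le_sF) dA_a) (leq_trans lt_cs (leq_addr _ _)) !orbT.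
Qed.

(* F itself is excluded because a does not divide F. *)
Lemma witness_inSat : inSat F W.
Proof.
split; [split; [|split]|split].
- by rewrite /W dvdn0.
- exact: witness_add.
- by exists F.+1 => x lt_Fx; rewrite /W lt_Fx !orbT.
- exact: witness_saturated.
- split; last by move=> x lt_Fx; rewrite /W lt_Fx !orbT.
  by apply: contra a_ndvd_F => WF; apply: witness_dvd WF (leqnn F).
Qed.

End Witness.

Lemma separated_minimal F X : SatF_set F X ->
  (forall x, X x -> exists T, [/\ inSat F T, ~~ T x &
     forall z, X z -> z != x -> T z]) ->
  SatF_minimal_system F (sat_closure F X) X.
Proof.
move=> setX sepX; split; first by split=> // x; exact: sat_closureP.
move=> Y YX [x [Xx nYx]] genY.
have [T [Tsat nTx XT]] := sepX x Xx.
have Tx : T x.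
  apply: ((genY x).1 (@sat_closure_sub F X x Xx) T Tsat) => z Yz.
  by apply: XT (YX z Yz) _; apply: contraNneq nYx => <-.
by rewrite Tx in nTx.
Qed.

Lemma count_mem_subseq (m l : seq nat) :
  uniq m -> uniq l -> {subset m <= l} -> count (mem m) l = size m.
Proof.
move=> m_uniq l_uniq ml; rewrite -size_filter; apply/perm_size/uniq_perm => //.
  exact: filter_uniq.
by move=> z; rewrite mem_filter; apply/andP/idP => [[]//|mz]; split=> //; apply: ml.
Qed.

Section Generators.

Variables a F p : nat.
Hypotheses (a_gt0 : 0 < a) (a_ndvd_F : ~~ (a %| F)) (small : a * (2 ^ p - 1) < F).

Definition gen (i : nat) : nat := a * (2 ^ p - 2 ^ (p - i)).

Definition gens : seq nat := [seq gen i | i <- iota 1 p].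

Lemma gen_ltn i j : i < j <= p -> gen i < gen j.
Proof.
move=> /andP [lt_ij le_jp]; rewrite /gen ltn_pmul2l // ltn_sub2l //.
  by rewrite ltn_exp2l //; lia.
by rewrite ltn_exp2l //; lia.
Qed.

Lemma gen_le i : gen i <= a * (2 ^ p - 1).
Proof. by rewrite /gen leq_mul2l leq_sub2l ?orbT // expn_gt0. Qed.

(* The generators with i < j are multiples of a * 2^(p-j+1) ... *)
Lemma modulus_dvd_gen i j : 0 < i < j -> j <= p -> a * 2 ^ (p - j).+1 %| gen i.
Proof.
move=> /andP [i_gt0 lt_ij] le_jp; apply: dvdn_mul (dvdnn a) _.
by apply: dvdn_sub; apply: dvdn_exp2l; lia.
Qed.

(* ... but gen j = a * 2^(p-j) * (2^j - 1) is not, 2^j - 1 being odd. *)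
Lemma modulus_ndvd_gen j : 0 < j <= p -> ~~ (a * 2 ^ (p - j).+1 %| gen j).
Proof.
move=> /andP [j_gt0 le_jp]; rewrite /gen.
have -> : p = (p - j) + j by lia.
rewrite addnK expnD -{2}(muln1 (2 ^ (p - j))) -mulnBr expnS.
rewrite mulnCA (mulnC 2) !mulnA dvdn_pmul2l ?muln_gt0 ?a_gt0 ?expn_gt0 //.
by rewrite dvdn2 oddB ?expn_gt0 // oddX; case: (j) j_gt0.
Qed.

Lemma gens_separated x : x \in gens -> exists T, [/\ inSat F T, ~~ T x &
  forall z, z \in gens -> z != x -> T z].
Proof.
case/mapP=> j; rewrite mem_iota => /andP [j_gt0 le_jp] ->{x}.
have le_jp' : j <= p by lia.
exists (sat_witness a F (a * 2 ^ (p - j).+1) (gen j)); split.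
- by apply: witness_inSat a_ndvd_F; apply: dvdn_mulr.
- rewrite /sat_witness ltnn andbF orbF (negbTE (modulus_ndvd_gen _)) ?j_gt0 //=.
  by rewrite -leqNgt (leq_trans (gen_le j) (ltnW small)).
- move=> z /mapP [i]; rewrite mem_iota => /andP [i_gt0 lt_ip] -> {z} ne_ij.
  have [lt_ij|lt_ji|eq_ij] := ltngtP i j; last by rewrite eq_ij eqxx in ne_ij.
    by rewrite /sat_witness modulus_dvd_gen ?i_gt0.
  have a_gen : a %| gen i by apply: dvdn_mulr.
  have lt_gen : gen j < gen i by apply: gen_ltn; rewrite lt_ji /=; lia.
  by rewrite /sat_witness a_gen lt_gen orbT.
Qed.

Lemma gens_uniq : uniq gens.
Proof.
rewrite map_inj_in_uniq ?iota_uniq // => i j; rewrite !mem_iota => lt_ip lt_jp.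
have [lt_ij|lt_ji|//] := ltngtP i j.
  by move=> eq_gen; have := gen_ltn (i := i) (j := j); rewrite eq_gen ltnn lt_ij; lia.
by move=> eq_gen; have := gen_ltn (i := j) (j := i); rewrite eq_gen ltnn lt_ji; lia.
Qed.

Lemma gens_bounds z : z \in gens -> 0 < z <= F.
Proof.
case/mapP=> i; rewrite mem_iota => /andP [i_gt0 lt_ip] ->.
have gen0 : gen 0 = 0 by rewrite /gen subn0 subnn muln0.
rewrite -gen0 gen_ltn ?i_gt0 /=; last lia.
exact: leq_trans (gen_le i) (ltnW small).
Qed.

Lemma rank_realized : exists S, inSat F S /\ SatF_rank_is F S p.
Proof.
pose X : pred nat := fun z => z \in gens.
have XW : subset_nat X (sat_witness a F a 0).
  by move=> z /mapP [i _ ->]; rewrite /sat_witness dvdn_mulr.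
have Wsat := witness_inSat 0 (dvdnn a) a_ndvd_F.
have setX : SatF_set F X by split; [exact: gens_bounds | exists (sat_witness a F a 0)].
exists (sat_closure F X); split; first exact: sat_closure_inSat Wsat XW.
exists X; split; first exact: separated_minimal setX gens_separated.
rewrite /card_SatF_set count_mem_subseq ?size_map ?size_iota ?iota_uniq ?gens_uniq //.
by move=> z /gens_bounds; rewrite mem_iota; lia.
Qed.

End Generators.

Unset Implicit Arguments.

Theorem corollary52 (F p a : nat) :
  0 < F -> 0 < p ->
  0 < a -> ~~ (a %| F) -> (forall b, 0 < b < a -> b %| F) ->
  ((exists S : pred nat, inSat F S /\ SatF_rank_is F S p) <->
   a * (2 ^ p - 1) < F).
Proof.
move=> F_gt0 p_gt0 a_gt0 a_ndvd_F below_a_dvd_F; split; last exact: rank_realized.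
case=> S [S_sat S_rank].
have [g [g_gt0 g_ndvd_F bound]] := rank_gcd_bound p_gt0 S_sat S_rank.
(* a is the least positive integer not dividing F, so a <= g. *)
have le_ag : a <= g.
  by rewrite leqNgt; apply: contra g_ndvd_F => lt_ga; apply: below_a_dvd_F; rewrite g_gt0.
exact: leq_ltn_trans (leq_mul le_ag (leqnn _)) bound.
Qed.
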